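(* Let $(g,n)$ be a hyperbolic pair and $d\in\mathbb Z$. The map $\mathfrak m\mapsto(\mathfrak m|_{\mathcal D(\Gamma)})_{\Gamma\in G_{g,n}}$ is a bijection from the set of degree $d$ universal stability conditions of type $(g,n)$ onto the set of families $(\mathfrak m^\Gamma)_{\Gamma\in G_{g,n}}$, where each $\mathfrak m^\Gamma$ is a degree $d$ c-stability condition on $\Gamma$, that agree on common domains (i.e. $\mathfrak m^\Gamma_{(e,h,A)}=\mathfrak m^{\Gamma'}_{(e,h,A)}$ whenever $(e,h,A)\in\mathcal D(\Gamma)\cap\mathcal D(\Gamma')$). The inverse sends such a family to $\mathfrak m$ with $\mathfrak m_{(e,h,A)}=\mathfrak m^\Gamma_{(e,h,A)}$ for any $\Gamma$ with $(e,h,A)\in\mathcal D(\Gamma)$.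
   Context: Fix integers $g,n\ge0$ with $2g-2+n>0$, $[n]=\{1,\dots,n\}$. A stable graph of type $(g,n)$ is a finite connected multigraph $\Gamma$ (loops allowed) with genus function $g:V(\Gamma)\to\mathbb Z_{\ge0}$ and markings $A(v)\subseteq[n]$ partitioning $[n]$, with $|E(\Gamma)|-|V(\Gamma)|+1+\sum_v g(v)=g$ and $2g(v)-2+\mathrm{val}(v)+|A(v)|>0$ for all $v$; $G_{g,n}$ is the set of representatives of isomorphism classes of such graphs. For $W\subseteq V(\Gamma)$: $\mathrm{val}(W)$ = number of edges between $W$ and its complement, $g(W)$ = genus of the induced subgraph $\Gamma[W]$ ($|E(\Gamma[W])|-|W|+1+\sum_{v\in W}g(v)$), $A(W)=\bigcup_{v\in W}A(v)$; $W$ is nontrivial biconnected if $\emptyset\ne W\ne V(\Gamma)$ and $W$ and its complement induce connected subgraphs; $\mathcal D(\Gamma)=\{(\mathrm{val}(W),g(W),A(W)): W \text{ nontrivial biconnected}\}$. The vine graph $V(e,h,A)$ has vertices $v_1,v_2$ joined by $e$ edges, no loops, $g(v_1)=h$, $A(v_1)=A$, $g(v_2)=g+1-e-h$, $A(v_2)=[n]\setminus A$; $\mathcal D_{g,n}$ is the set of $(e,h,A)$ ($e\ge1,h\ge0,g+1-e-h\ge0$, $A\subseteq[n]$) with $V(e,h,A)$ stable. A degree $d$ universal stability condition of type $(g,n)$ is a family of integers $(\mathfrak m_{(e,h,A)})_{(e,h,A)\in\mathcal D_{g,n}}$ with (i) $\mathfrak m_{(e,h,A)}+\mathfrak m_{(e,g+1-e-h,[n]\setminus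 A)}=d+1-e$ and (ii) $0\le \mathfrak m_{(e,h,A)}-h-(\mathfrak m_{(e',h',A')}-h')-(\mathfrak m_{(e'',h'',A'')}-h'')\le1$ whenever $A=A'\sqcup A''$, $2(h+1-h'-h'')=e'+e''-e$, and $e<e'+e''$, $e'<e+e''$, $e''<e+e'$. A degree $d$ c-stability condition on $\Gamma$ is a family of integers indexed by $\mathcal D(\Gamma)$ satisfying (i) and (ii) for all triples of elements of $\mathcal D(\Gamma)$. *)

From mathcomp Require Import all_boot all_order all_algebra.
Set Implicit Arguments. Unset Strict Implicit. Unset Printing Implicit Defensive.
Import Order.TTheory GRing.Theory Num.Theory.

(* Markings [n] = {1,...,n} are represented by 'I_n = {0,...,n-1}. *)

(* Vertices are 'I_nv, edges are 'I_ne; edge i joins the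
   two (unordered) endpoints (ends i).1 and (ends i).2 (a loop if equal).
   Marking j lies on vertex (mark j), so A(v) = [set j | mark j == v]. *)
Record sgraph (n : nat) := SGraph {
  nv : nat;
  ne : nat;
  ends : 'I_ne -> 'I_nv * 'I_nv;
  gen : 'I_nv -> nat;
  mark : 'I_n -> 'I_nv }.

Arguments nv {n} s.
Arguments ne {n} s.
Arguments ends {n} s _.
Arguments gen {n} s _.
Arguments mark {n} s _.

Section Graphs.
Variable n : nat.
Variable G : sgraph n.

Definition vtx := 'I_(nv G).

Definition adj : rel vtx :=
  fun u v => [exists i : 'I_(ne G), (ends G i == (u, v)) || (ends G i == (v, u))].

Definition Aof (v : vtx) : {set 'I_n} := [set j | mark G j == v].

Definition valv (v : vtx) : nat :=
  \sum_(i : 'I_(ne G)) (((ends G i).1 == v) + ((ends G i).2 == v)).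

Definition connectedG : bool :=
  (0 < nv G) && [forall u : vtx, forall v : vtx, connect adj u v].

Definition stable_graph (g : nat) : bool :=
  [&& connectedG,
      ne G + 1 + \sum_(v : vtx) gen G v == g + nv G &
      [forall v : vtx, 2 < 2 * gen G v + valv v + #|Aof v| ]].

Definition valW (W : {set vtx}) : nat :=
  #|[set i : 'I_(ne G) | ((ends G i).1 \in W) != ((ends G i).2 \in W)]|.

Definition edgesIn (W : {set vtx}) : nat :=
  #|[set i : 'I_(ne G) | ((ends G i).1 \in W) && ((ends G i).2 \in W)]|.

(* genus of the induced subgraph G[W]: |E(G[W])| - |W| + 1 + sum g(v);
   (computed in nat; exact whenever G[W] is connected, which is the only
   case in which it is used) *)
Definition genW (W : {set vtx}) : nat :=
  edgesIn W + 1 + \sum_(v in W) gen G v - #|W|.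

Definition AW (W : {set vtx}) : {set 'I_n} := [set j | mark G j \in W].

Definition induced_connected (W : {set vtx}) : bool :=
  [forall u in W, forall v in W,
     connect (fun x y => [&& x \in W, y \in W & adj x y]) u v].

Definition biconnected (W : {set vtx}) : bool :=
  [&& W != set0, W != setT, induced_connected W & induced_connected (~: W)].

Definition DG (x : nat * nat * {set 'I_n}) : bool :=
  [exists W : {set vtx}, biconnected W && (x == (valW W, genW W, AW W))].

End Graphs.

Definition triple (n : nat) := (nat * nat * {set 'I_n})%type.

Definition iso_sgraph (n : nat) (G1 G2 : sgraph n) : Prop :=
  exists (fV : 'I_(nv G1) -> 'I_(nv G2)) (fE : 'I_(ne G1) -> 'I_(ne G2)),
    [/\ bijective fV, bijective fE,
        (forall i, ends G2 (fE i) = (fV (ends G1 i).1, fV (ends G1 i).2)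
                \/ ends G2 (fE i) = (fV (ends G1 i).2, fV (ends G1 i).1)),
        (forall v, gen G2 (fV v) = gen G1 v) &
        (forall j, mark G2 j = fV (mark G1 j))].

(* The vine graph V(e,h,A): vertex 0 = v1, vertex 1 = v2. *)
Definition vine (g n e h : nat) (A : {set 'I_n}) : sgraph n :=
  @SGraph n 2 e (fun _ => (ord0, ord_max))
    (fun v => if v == ord0 then h else g + 1 - e - h)
    (fun j => if j \in A then ord0 else ord_max).

Definition Dgn (g n : nat) (x : triple n) : bool :=
  let: (e, h, A) := x in
  [&& 1 <= e, e + h <= g + 1 & stable_graph (vine g e h A) g].

Definition dual (g n : nat) (x : triple n) : triple n :=
  let: (e, h, A) := x in (e, g + 1 - e - h, ~: A).

(* conditions (i) and (ii) relative to a domain P of triples *)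
Definition stab_cond (g n : nat) (P : triple n -> bool) (d : int)
    (m : triple n -> int) : Prop :=
  (forall x, P x -> P (dual g x) ->
     (m x + m (dual g x) = d + 1 - (x.1.1)%:Z)%R) /\
  (forall e h A e' h' A' e'' h'' A'',
     P (e, h, A) -> P (e', h', A') -> P (e'', h'', A'') ->
     A = A' :|: A'' -> [disjoint A' & A''] ->
     (2 * (h%:Z + 1 - h'%:Z - h''%:Z) = e'%:Z + e''%:Z - e%:Z)%R ->
     e < e' + e'' -> e' < e + e'' -> e'' < e + e' ->
     let t := (m (e, h, A) - h%:Z - (m (e', h', A') - h'%:Z)
                 - (m (e'', h'', A'') - h''%:Z))%R in
     (0 <= t <= 1)%R).

(* degree d universal stability condition of type (g,n): only the values
   on D_{g,n} are meaningful *)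
Definition universal_stab (g n : nat) (d : int) (m : triple n -> int) : Prop :=
  stab_cond g (@Dgn g n) d m.

(* degree d c-stability condition on G: only the values on D(G) matter *)
Definition cstab (g n : nat) (G : sgraph n) (d : int) (m : triple n -> int) : Prop :=
  stab_cond g (DG G) d m.

(* R is a set of representatives of the isomorphism classes of stable graphs
   of type (g,n), i.e. R plays the role of G_{g,n}. *)
Definition representatives (g n : nat) (R : sgraph n -> Prop) : Prop :=
  [/\ (forall G, R G -> stable_graph G g),
      (forall G, stable_graph G g -> exists2 G', R G' & iso_sgraph G G') &
      (forall G G', R G -> R G' -> iso_sgraph G G' -> G = G')].

(* A biconnected vertex set W of a stable graph of type (g,n) yields a triple of
   D_{g,n}: summing the stability inequalities over W and over its complement, and
   bounding the number of vertices of the connected graphs G[W] and G[~W] by their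
   numbers of edges plus one, gives exactly the stability of the vine V(e,h,A);
   the genera of both sides add up to g + 1 - e, so ~W yields the dual triple.
   Conversely a triple of D_{g,n} and its dual occur in D of the vine itself, and
   three triples as in condition (ii) occur together in D of a graph with three
   vertices of genera h', h'', g + 1 - e - h, joined pairwise by (e' + e'' - e)/2,
   (e' + e - e'')/2 and (e'' + e - e')/2 edges.  Since D(G) is an isomorphism
   invariant, each instance of conditions (i) and (ii) lives in D(G) of a single
   representative G; so restriction preserves the conditions and is injective, and
   a compatible family glues to a universal condition by choosing, for each triple,
   any representative containing it. *)

From mathcomp Require Import all_boot all_order all_algebra.
From mathcomp Require Import zify.
From Stdlib Require Import ClassicalEpsilon.
Set Implicit Arguments. Unset Strict Implicit. Unset Printing Implicit Defensive.

Lemma connect_homo (T T' : finType) (e : rel T) (e' : rel T') (f : T -> T') :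
  {homo f : x y / e x y >-> e' x y} ->
  forall x y, connect e x y -> connect e' (f x) (f y).
Proof.
move=> fh x _ /connectP[p ep ->]; apply/connectP.
by exists (map f p); [exact: homo_path fh ep | rewrite last_map].
Qed.

Lemma connect_closed_sub (T : finType) (e e' : rel T) (a : {pred T}) x y :
  closed e a -> (forall u v, u \in a -> e u v -> e' u v) ->
  x \in a -> connect e x y -> connect e' x y.
Proof.
move=> cl ee' + /connectP[p]; elim: p x => [|z p IH] x ax /=; first by move=> _ ->.
case/andP=> exz pz yE; have az : z \in a by rewrite -(cl _ _ exz).
exact: connect_trans (connect1 (ee' _ _ ax exz)) (IH _ az pz yE).
Qed.

Section EdgeSets.
Variables (T I : finType) (ends : I -> T * T).
Implicit Types (S : {set I}) (W C : {set T}).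

Definition linked (S : {set I}) : rel T := fun u v =>
  [exists i in S, (ends i == (u, v)) || (ends i == (v, u))].

Definition edges_within (S : {set I}) (W : {set T}) :=
  forall i, i \in S -> ((ends i).1 \in W) && ((ends i).2 \in W).

Definition incident (S : {set I}) (C : {set T}) : {set I} :=
  [set i in S | (ends i).1 \in C].

Lemma linked_sym S : symmetric (linked S).
Proof. by move=> u v; apply: eq_existsb => i; rewrite orbC. Qed.

Lemma linked_ends S i : i \in S -> linked S (ends i).1 (ends i).2.
Proof. by move=> iS; apply/exists_inP; exists i; rewrite // -surjective_pairing eqxx. Qed.

Lemma connect_linked0 u v : connect (linked set0) u v -> u = v.
Proof.
case/connectP=> [[|z p] /=]; first by move=> _ ->.
by case/andP=> /exists_inP[i]; rewrite inE.
Qed.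

Lemma closed_linked_ends S C i :
  closed (linked S) C -> i \in S -> ((ends i).1 \in C) = ((ends i).2 \in C).
Proof. by move=> cl iS; apply: cl; apply: linked_ends. Qed.

Lemma connect_incident S C x y :
  closed (linked S) C -> x \in C -> connect (linked S) x y ->
  connect (linked (incident S C)) x y.
Proof.
move=> cl; apply: connect_closed_sub (cl) _ => u v uC euv.
have vC : v \in C by rewrite -(cl _ _ euv).
case/exists_inP: euv => i iS ei; apply/exists_inP; exists i => //.
by rewrite inE iS; case/orP: ei => /eqP ->.
Qed.

Lemma incident_within S W C :
  closed (linked S) C -> edges_within S W ->
  edges_within (incident S C) (W :&: C).
Proof.
move=> cl inW i; rewrite !inE => /andP[iS iC].
have /andP[-> ->] := inW i iS.
by rewrite -(closed_linked_ends cl iS) iC.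
Qed.

Lemma card_incidentC S C :
  #|incident S C| + #|incident S (~: C)| = #|S|.
Proof.
rewrite -(cardsID [set i | (ends i).1 \in C] S).
by congr (_ + _); apply: eq_card => i; rewrite !inE // andbC.
Qed.

Lemma connect_delete_edge S W i : i \in S ->
  {in W &, forall u v, connect (linked S) u v} -> (ends i).1 \in W ->
  forall w, w \in W ->
  connect (linked (S :\ i)) (ends i).1 w || connect (linked (S :\ i)) (ends i).2 w.
Proof.
move=> iS conW xW w wW; set S' := S :\ i.
pose B := [set z | connect (linked S') (ends i).1 z || connect (linked S') (ends i).2 z].
have clB : closed (linked S) B.
  apply: intro_closed => [|u v]; first exact: sym_connect_sym (linked_sym S).
  case/exists_inP=> j jS ej; rewrite !inE.
  have [ji | ji] := eqVneq j i.
    by move: ej => + _; rewrite ji => /orP[] /eqP ->; rewrite /= connect0 ?orbT.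
  have e'uv : linked S' u v by apply/exists_inP; exists j; rewrite // !inE ji.
  by case/orP => cu; apply/orP; [left | right]; apply: connect_trans cu (connect1 _).
by have := closed_connect clB (conW _ w xW wW); rewrite !inE connect0 => <-.
Qed.

(* Induction on S: deleting an edge splits W into at most two connected pieces,
   those of its two ends. *)
Lemma card_le_connected S W : edges_within S W ->
  {in W &, forall u v, connect (linked S) u v} -> #|W| <= #|S| + 1.
Proof.
have [k] := ubnP #|S|; elim: k S W => // k IH S W ltSk inW conW.
case: (set_0Vmem S) => [S0 | [i iS]].
  suff : #|W| <= 1 by lia.
  by apply/card_le1_eqP => u v uW vW; apply: connect_linked0; rewrite -S0 conW.
have xW : (ends i).1 \in W by case/andP: (inW i iS).
have reach := connect_delete_edge iS conW xW.
set S' := S :\ i; set x := (ends i).1; set y := (ends i).2.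
have symS' : connect_sym (linked S') := sym_connect_sym (linked_sym S').
pose C := [set w | connect (linked S') x w].
have clC : closed (linked S') C.
  by move=> u v /connect1 euv; rewrite !inE; apply: same_connect_r.
have clC' : closed (linked S') (~: C) by move=> u v /clC; rewrite !inE => ->.
have piece (D : {set T}) : closed (linked S') D ->
    {in W :&: D &, forall u v, connect (linked S') u v} ->
    #|W :&: D| <= #|incident S' D| + 1.
  move=> clD conD; apply: IH.
  - have : #|incident S' D| <= #|S'| by apply/subset_leq_card/subsetP => j /setIdP[].
    by have := cardsD1 i S; rewrite iS -/S'; lia.
  - by apply: incident_within => // j /setD1P[_]; apply: inW.
  - move=> u v uD vD; apply: connect_incident => //; first by case/setIP: uD.
    exact: conD.
have hC : #|W :&: C| <= #|incident S' C| + 1.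
  apply: piece clC _ => u v /setIP[_] + /setIP[_]; rewrite !inE => xu xv.
  by apply: connect_trans xv; rewrite symS'.
have hC' : #|W :&: ~: C| <= #|incident S' (~: C)| + 1.
  apply: piece clC' _ => u v /setIP[uW] + /setIP[vW]; rewrite !inE => xu xv.
  have [yu yv] : connect (linked S') y u /\ connect (linked S') y v.
    by split; [move: (reach u uW) | move: (reach v vW)]; rewrite ?(negbTE xu) ?(negbTE xv).
  by apply: connect_trans yv; rewrite symS'.
have := card_incidentC S' C; have := cardsD1 i S; have := cardsID C W.
by rewrite iS -/S' setDE; lia.
Qed.

End EdgeSets.

Lemma card_set_nat (I : finType) (P : pred I) : #|[set i | P i]| = \sum_i (P i : nat).
Proof. by rewrite -sum1_card big_mkcond; apply: eq_bigr => i _; rewrite inE; case: (P i). Qed.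

Lemma sum_eq_in (T : finType) (W : {set T}) a : \sum_(v in W) ((a == v) : nat) = (a \in W).
Proof.
rewrite big_mkcond (bigD1 a) //= eqxx big1 ?addn0; first by case: (a \in W).
by move=> v /negbTE; rewrite eq_sym => ->; case: (v \in W).
Qed.

Lemma adj_sym n (G : sgraph n) : symmetric (@adj _ G).
Proof. by move=> u v; apply: eq_existsb => i; rewrite orbC. Qed.

Section StableGraph.
Variables (n : nat) (G : sgraph n).
Implicit Types (W : {set vtx G}) (v : vtx G).

Definition inner_edges W : {set 'I_(ne G)} :=
  [set i | ((ends G i).1 \in W) && ((ends G i).2 \in W)].

Lemma induced_adj_linked W :
  [rel x y | [&& x \in W, y \in W & adj x y]] =2 linked (ends G) (inner_edges W).
Proof.
move=> x y; rewrite /= /linked; apply/and3P/exists_inP => [[xW yW /existsP[i ei]] | [i]].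
  by exists i; rewrite // inE; case/orP: ei => /eqP -> /=; rewrite xW yW.
rewrite inE => /andP[e1W e2W] ei.
have [xW yW] : x \in W /\ y \in W.
  by case/orP: ei e1W e2W => /eqP -> /= -> ->.
by split=> //; apply/existsP; exists i.
Qed.

Lemma card_le_edgesIn W : induced_connected W -> #|W| <= edgesIn W + 1.
Proof.
move=> icW; apply: (@card_le_connected _ _ (ends G) (inner_edges W)).
  by move=> i; rewrite inE.
move=> u v uW vW; rewrite -(eq_connect (induced_adj_linked W)).
exact: forall_inP (forall_inP icW u uW) v vW.
Qed.

Lemma valW_gt0 W : connectedG G -> W != set0 -> W != setT -> 0 < valW W.
Proof.
case/andP=> _ /forallP conG /set0Pn[u uW] WT.
have [v vW] : exists v, v \notin W.
  by apply/existsP; apply: contraNT WT; rewrite negb_exists => /forallP WT;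
    apply/eqP/setP => v; rewrite inE; apply/negPn.
rewrite lt0n cards_eq0; apply: contraNneq vW => val0.
have clW : closed (@adj _ G) W.
  apply: intro_closed => [|x y /existsP[i ei] xW].
    exact: sym_connect_sym (@adj_sym _ G).
  apply: contraT => yW; suff : i \in set0 by rewrite inE.
  by rewrite -val0 inE; case/orP: ei => /eqP -> /=; rewrite xW (negbTE yW).
by rewrite -(closed_connect clW (forallP (conG u) v)).
Qed.

Lemma edges_split W : ne G = edgesIn W + edgesIn (~: W) + valW W.
Proof.
rewrite /edgesIn /valW !card_set_nat -!big_split /= -[LHS]card_ord -sum1_card.
by apply: eq_bigr => i _; rewrite !inE; case: ((ends G i).1 \in W); case: ((ends G i).2 \in W).
Qed.

Lemma valv_sum W : \sum_(v in W) valv v = 2 * edgesIn W + valW W.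
Proof.
rewrite /valv exchange_big /edgesIn /valW !card_set_nat big_distrr -big_split /=.
apply: eq_bigr => i _; rewrite big_split /= !sum_eq_in.
by case: ((ends G i).1 \in W); case: ((ends G i).2 \in W).
Qed.

Lemma card_Aof_sum W : \sum_(v in W) #|Aof v| = #|AW W|.
Proof.
rewrite /AW card_set_nat -(eq_bigr _ (fun v _ => esym (card_set_nat _))).
by rewrite exchange_big; apply: eq_bigr => j _; rewrite sum_eq_in.
Qed.

Lemma valWC W : valW (~: W) = valW W.
Proof.
apply: eq_card => i; rewrite !inE.
by case: ((ends G i).1 \in W); case: ((ends G i).2 \in W).
Qed.

Lemma AWC W : AW (~: W) = ~: AW W.
Proof. by apply/setP => j; rewrite !inE. Qed.

Lemma biconnectedC W : biconnected (~: W) = biconnected W.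
Proof.
have C0 : (~: W == set0) = (W == setT).
  by apply/eqP/eqP => [/(congr1 (@setC _)) | ->]; rewrite ?setCK ?setC0 ?setCT.
have CT : (~: W == setT) = (W == set0).
  by apply/eqP/eqP => [/(congr1 (@setC _)) | ->]; rewrite ?setCK ?setC0 ?setCT.
rewrite /biconnected setCK C0 CT.
by case: (W == set0); case: (W == setT); case: (induced_connected W); case: (induced_connected (~: W)).
Qed.

Variable g : nat.
Hypothesis stG : stable_graph G g.

(* The tree bound makes the truncated subtractions in [genW] exact. *)
Lemma genW_add W : induced_connected W -> induced_connected (~: W) ->
  valW W + genW W + genW (~: W) = g + 1.
Proof.
move=> /card_le_edgesIn cW /card_le_edgesIn cWC.
case/and3P: stG => _ /eqP + _; rewrite (edges_split W).
have -> : \sum_v gen G v = \sum_(v in W) gen G v + \sum_(v in ~: W) gen G v.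
  by rewrite (bigID (mem W)) /=; congr (_ + _); apply: eq_bigl => v; rewrite inE.
have := cardsC W; rewrite card_ord /genW; lia.
Qed.

Lemma genW_stable W : W != set0 -> induced_connected W ->
  2 < 2 * genW W + valW W + #|AW W|.
Proof.
move=> /set0Pn[v vW] /card_le_edgesIn cW; case/and3P: stG => _ _ /forallP stv.
have : 3 * #|W| <= 2 * \sum_(v in W) gen G v + \sum_(v in W) valv v + \sum_(v in W) #|Aof v|.
  rewrite -sum1_card !big_distrr -!big_split /=.
  by apply: leq_sum => w _; rewrite muln1; apply: stv.
have : 0 < #|W| by apply/card_gt0P; exists v.
rewrite valv_sum card_Aof_sum /genW; lia.
Qed.

Lemma DG_dual x : DG G x -> DG G (dual g x).
Proof.
case/exists_inP=> W bicW /eqP ->; apply/exists_inP; exists (~: W); first by rewrite biconnectedC.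
case/and4P: bicW => _ _ icW icWC; have := genW_add icW icWC.
by rewrite /= valWC AWC => gW; apply/eqP; congr (_, _, _); lia.
Qed.

End StableGraph.

Lemma induced_connected_set1 n (G : sgraph n) (v : vtx G) : induced_connected [set v].
Proof. by apply/forall_inP => x /set1P ->; apply/forall_inP => y /set1P ->. Qed.

Lemma induced_connected_set2 n (G : sgraph n) (u v : vtx G) :
  adj u v -> induced_connected [set u; v].
Proof.
move=> auv; have avu : adj v u by rewrite adj_sym.
apply/forall_inP => x /set2P[] ->; apply/forall_inP => y /set2P[] ->;
  by rewrite ?connect0 // connect1 //= !inE !eqxx ?orbT.
Qed.

Lemma DG_vertex n (G : sgraph n) (v : vtx G) :
  1 < nv G -> edgesIn [set v] = 0 -> induced_connected (~: [set v]) ->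
  DG G (valv v, gen G v, Aof v).
Proof.
move=> nv2 loops0 icC.
have -> : (valv v, gen G v, Aof v) = (valW [set v], genW [set v], AW [set v]).
  have := valv_sum [set v]; rewrite big_set1 loops0 => ->.
  rewrite /genW loops0 big_set1 cards1 add0n addKn; congr (_, _, _).
  by apply/setP => j; rewrite !inE.
apply/exists_inP; exists [set v] => //; apply/and4P; split => //.
- by apply/set0Pn; exists v; rewrite inE.
- by apply: contraTneq nv2 => vT; have := cards1 v; rewrite vT cardsT card_ord => ->.
- exact: induced_connected_set1.
Qed.

Lemma ord2_cases (v : 'I_2) : v = ord0 \/ v = ord_max.
Proof. by case: v => [[|[|m]] lt_v]; [left | right | ]; try apply: val_inj. Qed.

Section Vine.
Variables (g n e h : nat) (A : {set 'I_n}).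
Local Notation V := (vine g e h A).

Lemma vine_valv (v : vtx V) : valv v = e.
Proof.
rewrite /valv -[RHS]card_ord -sum1_card; apply: eq_bigr => i _ /=.
by case: (ord2_cases v) => ->.
Qed.

Lemma vine_Aof0 : Aof (G := V) ord0 = A.
Proof. by apply/setP => j; rewrite !inE /=; case: (j \in A). Qed.

Lemma vine_Aof1 : Aof (G := V) ord_max = ~: A.
Proof. by apply/setP => j; rewrite !inE /=; case: (j \in A). Qed.

Lemma vine_connected : 0 < e -> connectedG V.
Proof.
move=> e0; have a01 : adj (G := V) ord0 ord_max.
  by apply/existsP; exists (Ordinal e0); rewrite eqxx.
apply/andP; split => //; apply/forallP => u; apply/forallP => v.
have a10 := a01; rewrite adj_sym in a10.
by case: (ord2_cases u) => ->; case: (ord2_cases v) => ->; rewrite ?connect0 ?connect1.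
Qed.

Lemma DgnE : Dgn g (e, h, A) =
  [&& 0 < e, e + h <= g + 1, 2 < 2 * h + e + #|A| & 2 < 2 * (g + 1 - e - h) + e + #|~: A|].
Proof.
rewrite /Dgn /stable_graph; case: (ltnP 0 e) => [e0 | ] //=; case: (leqP (e + h) (g + 1)) => //= eh.
rewrite vine_connected //= !big_ord_recl big_ord0 /=.
have -> : ne V + 1 + (h + (g + 1 - e - h + 0)) == g + nv V by apply/eqP => /=; lia.
apply/forallP/andP => [stv | [st0 st1] v].
  by have := stv ord0; have := stv ord_max; rewrite !vine_valv vine_Aof0 vine_Aof1.
by rewrite vine_valv; case: (ord2_cases v) => ->; rewrite ?vine_Aof0 ?vine_Aof1.
Qed.

Lemma vine_DG : DG V (e, h, A).
Proof.
have := @DG_vertex _ V ord0; rewrite vine_valv vine_Aof0; apply => //.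
  by apply: eq_card0 => i; rewrite !inE.
have -> : ~: [set ord0] = [set ord_max : vtx V].
  by apply/setP => v; rewrite !inE; case: (ord2_cases v) => ->.
exact: induced_connected_set1.
Qed.

End Vine.

Lemma DG_Dgn n (G : sgraph n) g x : stable_graph G g -> DG G x -> Dgn g x.
Proof.
move=> stG /exists_inP[W bicW /eqP ->].
have /and4P[WC0 _ _ _] : biconnected (~: W) by rewrite biconnectedC.
case/and4P: bicW => W0 WT icW icWC.
have := genW_stable stG W0 icW; have := genW_stable stG WC0 icWC.
have conG : connectedG G by case/and3P: stG.
have := genW_add stG icW icWC; have := valW_gt0 conG W0 WT.
rewrite DgnE valWC AWC => *; apply/and4P; split; lia.
Qed.

Definition t0 : 'I_3 := ord0.
Definition t1 : 'I_3 := Ordinal (isT : 1 < 3).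
Definition t2 : 'I_3 := ord_max.

Lemma ord3_cases (v : 'I_3) : [\/ v = t0, v = t1 | v = t2].
Proof.
by case: v => [[|[|[|m]]] lt_v]; [apply: Or31 | apply: Or32 | apply: Or33 | ]; try apply: val_inj.
Qed.

Section Triangle.
Variables (n a b c h0 h1 h2 : nat) (A0 A1 : {set 'I_n}).

Definition triangle : sgraph n := @SGraph n 3 (a + b + c)
  (fun i => if val i < a then (t0, t1) else if val i < a + b then (t0, t2) else (t1, t2))
  (fun v => if v == t0 then h0 else if v == t1 then h1 else h2)
  (fun j => if j \in A0 then t0 else if j \in A1 then t1 else t2).

Local Notation T := triangle.

Lemma triangle_sum_edges (phi : 'I_3 * 'I_3 -> nat) :
  \sum_(i : 'I_(ne T)) phi (ends T i) = a * phi (t0, t1) + b * phi (t0, t2) + c * phi (t1, t2).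
Proof.
rewrite -(big_mkord xpredT (fun k =>
  phi (if k < a then (t0, t1) else if k < a + b then (t0, t2) else (t1, t2)))).
rewrite (@big_cat_nat _ _ _ a 0 (a + b + c)) //=; last by lia.
rewrite (@big_cat_nat _ _ _ (a + b) a (a + b + c)) //=; try by lia.
rewrite (eq_big_nat _ _ (F2 := fun _ => phi (t0, t1))); last by move=> k /andP[_ ->].
rewrite [X in _ + (X + _)](eq_big_nat _ _ (F2 := fun _ => phi (t0, t2))); last first.
  by move=> k /andP[ak ->]; rewrite ltnNge ak.
rewrite [X in _ + (_ + X)](eq_big_nat _ _ (F2 := fun _ => phi (t1, t2))); last first.
  by move=> k /andP[abk _]; rewrite !ltnNge abk (leq_trans (leq_addr b a) abk).
by rewrite !sum_nat_const_nat; lia.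
Qed.

Lemma triangle_valv (v : vtx T) :
  valv v = a * ((t0 == v) + (t1 == v)) + b * ((t0 == v) + (t2 == v)) + c * ((t1 == v) + (t2 == v)).
Proof. exact: (triangle_sum_edges (fun p => (p.1 == v) + (p.2 == v))). Qed.

Lemma triangle_loops0 (v : vtx T) : edgesIn [set v] = 0.
Proof.
rewrite /edgesIn card_set_nat (triangle_sum_edges (fun p => (p.1 \in [set v]) && (p.2 \in [set v]))).
by rewrite !inE; case: (ord3_cases v) => -> /=; lia.
Qed.

Lemma triangle_gen_sum : \sum_(v : vtx T) gen T v = h0 + h1 + h2.
Proof. by rewrite !big_ord_recl big_ord0 /= addn0 addnA. Qed.

Hypotheses (a0 : 0 < a) (b0 : 0 < b) (c0 : 0 < c) (A01 : [disjoint A0 & A1]).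

Lemma triangle_adj (u v : vtx T) : u != v -> adj u v.
Proof.
have a01 : adj (G := T) t0 t1.
  by apply/existsP; exists (@Ordinal (a + b + c) 0 ltac:(lia)); rewrite /= a0.
have a02 : adj (G := T) t0 t2.
  apply/existsP; exists (@Ordinal (a + b + c) a ltac:(lia)).
  by rewrite /= ltnn (_ : a < a + b) //; lia.
have a12 : adj (G := T) t1 t2.
  apply/existsP; exists (@Ordinal (a + b + c) (a + b) ltac:(lia)).
  by rewrite /= ltnn (_ : a + b < a = false) //; lia.
by case: (ord3_cases u) => ->; case: (ord3_cases v) => -> //= _; rewrite adj_sym.
Qed.

Lemma triangle_connected : connectedG T.
Proof.
apply/andP; split => //; apply/forallP => u; apply/forallP => v.
by have [-> | uv] := eqVneq u v; rewrite ?connect0 // connect1 // triangle_adj.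
Qed.

Lemma triangle_Aof0 : Aof (G := T) t0 = A0.
Proof. by apply/setP => j; rewrite !inE /=; case: (j \in A0); case: (j \in A1). Qed.

Lemma triangle_Aof1 : Aof (G := T) t1 = A1.
Proof.
apply/setP => j; rewrite !inE /=; case jA0: (j \in A0); first by rewrite (disjointFr A01 jA0).
by case: (j \in A1).
Qed.

Lemma triangle_Aof2 : Aof (G := T) t2 = ~: (A0 :|: A1).
Proof. by apply/setP => j; rewrite !inE /=; case: (j \in A0); case: (j \in A1). Qed.

Lemma triangle_DG (v : vtx T) : DG T (valv v, gen T v, Aof v).
Proof.
apply: DG_vertex => //; first exact: triangle_loops0.
pose u := if v == t0 then t1 else t0; pose w := if v == t2 then t1 else t2.
have -> : ~: [set v] = [set u; w].
  by apply/setP => x; rewrite !inE /u /w; case: (ord3_cases v) => ->; case: (ord3_cases x) => ->.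
by apply: induced_connected_set2; apply: triangle_adj; rewrite /u /w; case: (ord3_cases v) => ->.
Qed.

Lemma triangle_DG0 : DG T (a + b, h0, A0).
Proof.
suff -> : (a + b, h0, A0) = (valv (G := T) t0, gen T t0, Aof (G := T) t0) by apply: triangle_DG.
by rewrite triangle_valv triangle_Aof0 /=; congr (_, _, _); lia.
Qed.

Lemma triangle_DG1 : DG T (a + c, h1, A1).
Proof.
suff -> : (a + c, h1, A1) = (valv (G := T) t1, gen T t1, Aof (G := T) t1) by apply: triangle_DG.
by rewrite triangle_valv triangle_Aof1 /=; congr (_, _, _); lia.
Qed.

Lemma triangle_DG01 g : stable_graph T g -> DG T (b + c, g + 1 - (b + c) - h2, A0 :|: A1).
Proof.
move=> stT; have := DG_dual stT (triangle_DG t2).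
by rewrite triangle_valv triangle_Aof2 /= setCK (_ : a * 0 + b * 1 + c * 1 = b + c) //; lia.
Qed.

Variable g : nat.
Hypotheses (genus : a + b + c + h0 + h1 + h2 = g + 2)
  (stable0 : 2 < 2 * h0 + (a + b) + #|A0|) (stable1 : 2 < 2 * h1 + (a + c) + #|A1|)
  (stable2 : 2 < 2 * h2 + (b + c) + #|~: (A0 :|: A1)|).

Lemma triangle_stable : stable_graph T g.
Proof.
apply/and3P; split; first exact: triangle_connected.
  by rewrite triangle_gen_sum; apply/eqP => /=; lia.
apply/forallP => v; rewrite triangle_valv.
case: (ord3_cases v) => ->; rewrite ?triangle_Aof0 ?triangle_Aof1 ?triangle_Aof2 /=;
  by rewrite ?addn0 ?add0n ?muln0 ?muln1 ?addn0 ?add0n.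
Qed.

End Triangle.

Section Isomorphism.
Variables (n : nat) (G1 G2 : sgraph n).
Variables (fV : vtx G1 -> vtx G2) (fE : 'I_(ne G1) -> 'I_(ne G2)).
Hypotheses (fV_bij : bijective fV) (fE_bij : bijective fE).
Hypothesis fE_ends : forall i,
  ends G2 (fE i) = (fV (ends G1 i).1, fV (ends G1 i).2) \/
  ends G2 (fE i) = (fV (ends G1 i).2, fV (ends G1 i).1).
Hypothesis fV_gen : forall v, gen G2 (fV v) = gen G1 v.
Hypothesis fV_mark : forall j, mark G2 j = fV (mark G1 j).
Implicit Type W : {set vtx G1}.

Let fV_inj : injective fV := bij_inj fV_bij.

Lemma setC_imset_iso W : ~: (fV @: W) = fV @: (~: W).
Proof.
apply/setP => v; have [u ->] : exists u, v = fV u.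
  by case: fV_bij => fV' _ fVK; exists (fV' v); rewrite fVK.
by rewrite inE !mem_imset // inE.
Qed.

Lemma card_edges_iso (P : bool -> bool -> bool) W : (forall a b, P a b = P b a) ->
  #|[set i | P ((ends G2 i).1 \in fV @: W) ((ends G2 i).2 \in fV @: W)]| =
  #|[set i | P ((ends G1 i).1 \in W) ((ends G1 i).2 \in W)]|.
Proof.
move=> PC; rewrite !card_set_nat (reindex fE) /=; last exact: onW_bij.
by apply: eq_bigr => i _; case: (fE_ends i) => ->; rewrite /= !mem_imset // PC.
Qed.

Lemma valW_iso W : valW (fV @: W) = valW W.
Proof. by rewrite /valW (card_edges_iso (P := fun a b => a != b)) // => a b; rewrite eq_sym. Qed.

Lemma genW_iso W : genW (fV @: W) = genW W.
Proof.
rewrite /genW /edgesIn (card_edges_iso W andbC) card_imset // big_imset /=; last exact: in2W.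
by under eq_bigr do rewrite fV_gen.
Qed.

Lemma AW_iso W : AW (fV @: W) = AW W.
Proof. by apply/setP => j; rewrite !inE fV_mark mem_imset. Qed.

Lemma induced_connected_iso W : induced_connected W -> induced_connected (fV @: W).
Proof.
move=> /forall_inP icW; apply/forall_inP => _ /imsetP[u uW ->].
apply/forall_inP => _ /imsetP[v vW ->].
apply: connect_homo (forall_inP (icW u uW) v vW) => x y /and3P[xW yW /existsP[i ei]].
rewrite /= !mem_imset // xW yW; apply/existsP; exists (fE i).
by case: (fE_ends i) => ->; case/orP: ei => /eqP -> /=; rewrite eqxx ?orbT.
Qed.

Lemma biconnected_iso W : biconnected W -> biconnected (fV @: W).
Proof.
case/and4P=> W0 WT icW icWC; apply/and4P; split.
- by rewrite imset_eq0.
- apply: (contraNneq _ WT) => /(congr1 (@setC _)); rewrite setC_imset_iso setCT => /eqP.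
  by rewrite imset_eq0 => /eqP /(congr1 (@setC _)); rewrite setCK setC0 => ->.
- exact: induced_connected_iso.
- by rewrite setC_imset_iso; apply: induced_connected_iso.
Qed.

Lemma DG_iso_sub x : DG G1 x -> DG G2 x.
Proof.
case/exists_inP=> W bicW /eqP ->; apply/exists_inP; exists (fV @: W).
  exact: biconnected_iso.
by rewrite valW_iso genW_iso AW_iso.
Qed.

End Isomorphism.

Lemma DG_iso n (G1 G2 : sgraph n) x : iso_sgraph G1 G2 -> DG G1 x -> DG G2 x.
Proof.
case=> fV [fE [fV_bij fE_bij fE_ends fV_gen fV_mark]].
exact: (DG_iso_sub fV_bij fE_bij fE_ends fV_gen fV_mark).
Qed.

Lemma triple_realized g n e h (A : {set 'I_n}) e' h' A' e'' h'' A'' :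
  Dgn g (e, h, A) -> Dgn g (e', h', A') -> Dgn g (e'', h'', A'') ->
  A = A' :|: A'' -> [disjoint A' & A''] ->
  (2 * (h%:Z + 1 - h'%:Z - h''%:Z) = e'%:Z + e''%:Z - e%:Z)%R ->
  e < e' + e'' -> e' < e + e'' -> e'' < e + e' ->
  exists2 G : sgraph n, stable_graph G g &
    [/\ DG G (e, h, A), DG G (e', h', A') & DG G (e'', h'', A'')].
Proof.
rewrite !DgnE => /and4P[_ eh _ st2] /and4P[_ _ st0 _] /and4P[_ _ st1 _] AU A01 tri l1 l2 l3.
(* by [tri], a = (e' + e'' - e) / 2 *)
pose a := h + 1 - h' - h''; pose b := e' - a; pose c := e'' - a; pose h2 := g + 1 - e - h.
have [a0 b0 c0] : [/\ 0 < a, 0 < b & 0 < c] by split; lia.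
have [ab ac bc] : [/\ a + b = e', a + c = e'' & b + c = e] by split; lia.
have stT : stable_graph (triangle a b c h' h'' h2 A' A'') g.
  by apply: triangle_stable => //; rewrite ?ab ?ac ?bc -?AU; lia.
exists (triangle a b c h' h'' h2 A' A'') => //; split.
- have := triangle_DG01 a0 b0 c0 A01 stT; rewrite -AU bc.
  by rewrite (_ : g + 1 - e - h2 = h) //; lia.
- by rewrite -ab; apply: triangle_DG0.
- by rewrite -ac; apply: triangle_DG1.
Qed.

Section Gluing.
Variables (g n : nat) (d : int) (R : sgraph n -> Prop).
Hypothesis Rrep : representatives g R.

Lemma DG_representative G : stable_graph G g ->
  exists2 G', R G' & forall x, DG G x -> DG G' x.
Proof.
case: Rrep => _ covR _ /covR[G' RG' isoG]; exists G' => // x; exact: DG_iso.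
Qed.

Lemma Dgn_covered x : Dgn g x -> exists2 G, R G & DG G x.
Proof.
case: x => [[e h] A] /and3P[_ _ stV].
by have [G RG /(_ _ (vine_DG g e h A))] := DG_representative stV; exists G.
Qed.

Lemma DG_rep_Dgn G : R G -> forall x, DG G x -> Dgn g x.
Proof. by case: Rrep => stR _ _ /stR stG x; apply: DG_Dgn. Qed.

Lemma cstab_universal m : universal_stab g d m -> forall G, R G -> cstab g G d m.
Proof.
move=> [dual_m tri_m] G RG; have DGn := DG_rep_Dgn RG; split.
  by move=> x /DGn Dx /DGn Ddx; apply: dual_m.
by move=> e h A e' h' A' e'' h'' A'' /DGn ? /DGn ? /DGn ?; apply: tri_m.
Qed.

Lemma universal_glue (F : sgraph n -> triple n -> int) :
  (forall G, R G -> cstab g G d (F G)) ->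
  (forall G G', R G -> R G' -> forall x, DG G x -> DG G' x -> F G x = F G' x) ->
  exists m, universal_stab g d m /\ (forall G, R G -> forall x, DG G x -> m x = F G x).
Proof.
move=> cstabF agreeF.
have pick x : {G | Dgn g x -> R G /\ DG G x}.
  apply: constructive_indefinite_description; case Dx: (Dgn g x).
    by have [G RG DGx] := Dgn_covered Dx; exists G.
  by exists (vine g 0 0 set0). (* irrelevant outside D_{g,n} *)
pose m x := F (sval (pick x)) x.
have mE G x : R G -> DG G x -> m x = F G x.
  move=> RG DGx; have [RG' DG'x] := svalP (pick x) (DG_rep_Dgn RG DGx).
  exact: agreeF.
exists m; split; last by move=> G RG x; apply: mE.
split.
  move=> [[e h] A] /and3P[_ _ stV] _.
  have [G RG sub] := DG_representative stV.
  have DGx := sub _ (vine_DG g e h A); have DGdx := sub _ (DG_dual stV (vine_DG g e h A)).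
  by rewrite (mE G _ RG DGx) (mE G _ RG DGdx); apply: (cstabF G RG).1.
move=> e h A e' h' A' e'' h'' A'' D D' D'' AU A01 tri l1 l2 l3.
have [G0 stG0 [D0 D0' D0'']] := triple_realized D D' D'' AU A01 tri l1 l2 l3.
have [G RG sub] := DG_representative stG0.
rewrite (mE G _ RG (sub _ D0)) (mE G _ RG (sub _ D0')) (mE G _ RG (sub _ D0'')).
exact: (cstabF G RG).2 (sub _ D0) (sub _ D0') (sub _ D0'') AU A01 tri l1 l2 l3.
Qed.

End Gluing.

Unset Implicit Arguments.

Theorem mainTheorem11 (g n : nat) (d : int) (R : sgraph n -> Prop) :
  2 < 2 * g + n ->
  representatives g R ->
  [/\
   (forall x, Dgn g x -> exists2 G, R G & DG G x),
   (forall G, R G -> forall x, DG G x -> Dgn g x),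
   (forall m, universal_stab g d m -> forall G, R G -> cstab g G d m),
   (forall m m', universal_stab g d m -> universal_stab g d m' ->
      (forall G, R G -> forall x, DG G x -> m x = m' x) ->
      forall x, Dgn g x -> m x = m' x) &
   (forall F : sgraph n -> triple n -> int,
      (forall G, R G -> cstab g G d (F G)) ->
      (forall G G', R G -> R G' -> forall x, DG G x -> DG G' x -> F G x = F G' x) ->
      exists m, universal_stab g d m /\
        (forall G, R G -> forall x, DG G x -> m x = F G x))].
Proof.
move=> _ Rrep; split.
- exact: Dgn_covered.
- exact: DG_rep_Dgn.
- exact: cstab_universal.
- by move=> m m' _ _ agree x /(Dgn_covered Rrep)[G RG DGx]; exact: agree G RG x DGx.
- exact: universal_glue.
Qed.
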